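(* Let $(\mathcal A,U,\varphi)$ be a sequential formalism and $R\in\mathcal A$. Then: (1) if $\Rsh R$ is trivially inconsistent (i.e. some component of $\Rsh R$ is $\emptyset$), then $R$ is unsatisfiable; (2) if $R$ is satisfiable, then $\Rsh R$ is $\Rsh$-consistent; (3) every satisfiable basic relation is $\Rsh$-consistent.
   Context: A finite non-associative algebra is a tuple $(\mathcal A,\cup,\neg,\emptyset,\mathcal B,\diamond,\overline{\cdot},e)$ where $(\mathcal A,\cup,\neg,\emptyset,\mathcal B)$ is a finite Boolean algebra (with $x\cap y=\neg(\neg x\cup\neg y)$) and for all $x,y,z$: $\overline{\overline x}=x$, $\overline{x\cup y}=\overline x\cup\overline y$, $\overline{x\diamond y}=\overline y\diamond\overline x$, $e\diamond x=x\diamond e=x$, $x\diamond(y\cup z)=(x\diamond y)\cup(x\diamond z)$, $(x\diamond y)\cap\overline z=\emptyset\iff(y\diamond z)\cap\overline x=\emptyset$. $\mathcal B$ is the universal relation; $r\subseteq r'$ means $r\cup r'=r'$; atoms are basic relations. A projection operator from $\mathcal A$ to $\mathcal A'$ is a map $\Rsh$ with $\Rsh(r\cup r')=\Rsh r\cup\Rsh r'$ and $\Rsh\overline r=\overline{\Rsh r}$. A finite multi-algebra is a product $\mathcal A_1\times\cdots\times\mathcal A_m$ of finite non-associative algebras with projection operators $\Rsh_i^j:\mathcal A_i\to\mathcal A_j$ for all distinct $i,j$. Relations $R=(R_1,\dots,R_m)$; basic if all $R_i$ are atoms; universal relation $\mathcal B=(\mathcal B_1,\dots,\mathcal B_m)$;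 operations and $\subseteq$ componentwise; $B\in R$ means $B$ basic, $B\subseteq R$. $R$ is closed under projection if $R_j\subseteq\Rsh_i^jR_i$ for all distinct $i,j$; the projection closure $\Rsh R$ is obtained by repeatedly replacing $R_j$ by $R_j\cap\Rsh_i^jR_i$ until a fixed point. $R$ is $\Rsh$-consistent if it is closed under projection and $R_i\ne\emptyset$ for all $i$. A sequential formalism is $(\mathcal A,U,\varphi)$ with $\mathcal A$ a finite multi-algebra, $U\ne\emptyset$, $\varphi:\mathcal A\to 2^{U\times U}$ satisfying $\varphi(\Rsh R)=\varphi(R)$, $\varphi(\overline R)=\varphi(R)^{-1}$, $\varphi((\emptyset,\dots,\emptyset))=\emptyset$, $\varphi(R\diamond R')\supseteq(\varphi(R)\circ\varphi(R'))\cap\varphi(\mathcal B)$, $\varphi(R\cap R')=\varphi(R)\cap\varphi(R')$, $\varphi(R)=\bigcup_{B\in R}\varphi(B)$. $R$ is satisfiable if $\varphi(R)\ne\emptyset$. *)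

From mathcomp Require Import all_boot.
Set Implicit Arguments. Unset Strict Implicit. Unset Printing Implicit Defensive.

(* A finite Boolean algebra is represented (up to isomorphism) as the powerset
   {set T} of its finite set T of atoms (basic relations): union = :|:,
   complement = ~:, empty = set0, universal relation = setT, intersection = :&:,
   inclusion = \subset. *)

Record nalgebra (T : finType) := NAlgebra {
  conv  : {set T} -> {set T};
  comp  : {set T} -> {set T} -> {set T};
  ident : {set T};
  conv_invol : forall x, conv (conv x) = x;
  conv_union : forall x y, conv (x :|: y) = conv x :|: conv y;
  conv_comp  : forall x y, conv (comp x y) = comp (conv y) (conv x);
  ident_l    : forall x, comp ident x = x;
  ident_r    : forall x, comp x ident = x;
  comp_union : forall x y z, comp x (y :|: z) = comp x y :|: comp x z;
  peirce     : forall x y z,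
      (comp x y :&: conv z == set0) = (comp y z :&: conv x == set0)
}.

Record multialgebra := MultiAlgebra {
  dim   : nat;
  atoms : 'I_dim -> finType;
  alg   : forall i, nalgebra (atoms i);
  proj  : forall i j : 'I_dim, {set atoms i} -> {set atoms j};
  proj_union : forall (i j : 'I_dim), i != j -> forall r r' : {set atoms i},
      @proj i j (r :|: r') = @proj i j r :|: @proj i j r';
  proj_conv : forall (i j : 'I_dim), i != j -> forall r : {set atoms i},
      @proj i j (conv (alg i) r) = conv (alg j) (@proj i j r)
}.

Arguments proj : clear implicits.
Arguments alg : clear implicits.
Section Multi.
Variable M : multialgebra.

Definition mrel := forall i : 'I_(dim M), {set atoms i}.

Definition mempty : mrel := fun i => set0.
Definition muniv  : mrel := fun i => setT.
Definition mconv (R : mrel) : mrel := fun i => conv (alg M i) (R i).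
Definition mcomp (R R' : mrel) : mrel := fun i => comp (alg M i) (R i) (R' i).
Definition minter (R R' : mrel) : mrel := fun i => R i :&: R' i.
Definition msub (R R' : mrel) : Prop := forall i, R i \subset R' i.

Definition basic (R : mrel) : Prop := forall i, exists a, R i = [set a].

Definition proj_closed (R : mrel) : Prop :=
  forall i j, i != j -> R j \subset proj M i j (R i).

Definition pstep (R : mrel) : mrel :=
  fun j => R j :&: \bigcap_(i | i != j) proj M i j (R i).

(* The projection closure: iterate the refinement until a fixed point; the
   total number of atoms bounds the number of strict refinements. *)
Definition pclosure (R : mrel) : mrel :=
  iter (\sum_(i < dim M) #|atoms i|) pstep R.

Definition pconsistent (R : mrel) : Prop :=
  proj_closed R /\ forall i, R i != set0.

End Multi.

Record seqformalism (M : multialgebra) (U : Type) := SeqFormalism {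
  phi : mrel M -> U -> U -> Prop;
  U_nonempty : inhabited U;
  phi_closure : forall R u v, phi (pclosure R) u v <-> phi R u v;
  phi_conv : forall R u v, phi (mconv R) u v <-> phi R v u;
  phi_empty : forall u v, ~ phi (@mempty M) u v;
  phi_comp : forall R R' u w v,
      phi R u w -> phi R' w v -> phi (@muniv M) u v -> phi (mcomp R R') u v;
  phi_inter : forall R R' u v, phi (minter R R') u v <-> (phi R u v /\ phi R' u v);
  phi_basic : forall R u v,
      phi R u v <-> exists B, [/\ basic B, msub B R & phi B u v]
}.

Definition satisfiable M U (F : seqformalism M U) (R : mrel M) : Prop :=
  exists u v, phi F R u v.

From mathcomp Require Import all_boot.
Set Implicit Arguments. Unset Strict Implicit. Unset Printing Implicit Defensive.

(* Each refinement step either leaves the relation unchanged or removes an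
   atom, and there are only sum_i |atoms i| atoms, so the projection closure
   is a fixed point of the refinement step, hence closed under projection.
   A satisfiable relation contains a basic relation below its closure, so no
   component of the closure is empty; for a basic relation the closure, a
   nonempty subrelation of a tuple of singletons, is the relation itself. *)

Section ProjectionClosure.
Variable M : multialgebra.
Implicit Types P R B : mrel M.

Definition msize R : nat := \sum_(i < dim M) #|R i|.

Lemma msize_le_atoms R : msize R <= \sum_(i < dim M) #|atoms i|.
Proof. by apply: leq_sum => i _; apply: max_card. Qed.

Lemma pstep_subset R j : pstep R j \subset R j.
Proof. exact: subsetIl. Qed.

Lemma eq_pstep P R : (forall i, P i = R i) -> forall j, pstep P j = pstep R j.
Proof. by move=> eqPR j; rewrite /pstep eqPR; under eq_bigr do rewrite eqPR. Qed.

Lemma msize_pstep_lt P : (exists j, pstep P j != P j) -> msize (pstep P) < msize P.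
Proof.
move=> [j neq_j]; rewrite /msize (bigD1 j) //= [X in _ < X](bigD1 j) //= -addSn.
apply: leq_add; first by apply: proper_card; rewrite properEneq neq_j pstep_subset.
by apply: leq_sum => i _; apply/subset_leq_card/pstep_subset.
Qed.

Lemma iter_pstep_fixed_or_shrinks n R :
  (forall j, pstep (iter n (@pstep M) R) j = iter n (@pstep M) R j) \/
  msize (iter n (@pstep M) R) + n <= msize R.
Proof.
elim: n => [|n IHn] /=; first by right; rewrite addn0.
set P := iter n (@pstep M) R in IHn *.
case: IHn => [fixed | shrunk].
  by left=> j; rewrite (eq_pstep fixed) fixed.
have [/forallP fixed | /forallPn [j neq_j]] := boolP [forall j, pstep P j == P j].
  by left=> j; apply: eq_pstep => i; apply/eqP.
right; apply: leq_trans shrunk; rewrite addnS ltn_add2r.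
by apply: msize_pstep_lt; exists j.
Qed.

Lemma pstep_pclosure R j : pstep (pclosure R) j = pclosure R j.
Proof.
rewrite /pclosure; set N := \sum_(i < dim M) #|atoms i|.
have [|shrunk] := iter_pstep_fixed_or_shrinks N R; first exact.
have : msize (iter N (@pstep M) R) == 0.
  by rewrite -leqn0 -(leq_add2r N) (leq_trans shrunk) ?msize_le_atoms.
rewrite /msize sum_nat_eq0 => /forallP /(_ j) /=; rewrite cards_eq0 => /eqP empty_j.
by apply/eqP; rewrite empty_j -subset0 -empty_j pstep_subset.
Qed.

Lemma pclosure_subset R j : pclosure R j \subset R j.
Proof.
rewrite /pclosure; elim: (\sum_(i < dim M) #|atoms i|) => //= n IHn.
exact: subset_trans (pstep_subset _ _) IHn.
Qed.

Lemma proj_closed_pclosure R : proj_closed (pclosure R).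
Proof.
move=> i j neq_ij; rewrite -pstep_pclosure.
apply: subset_trans (subsetIr _ _) _; exact: bigcap_inf.
Qed.

Lemma pclosure_basic B :
  basic B -> (forall i, pclosure B i != set0) -> forall i, pclosure B i = B i.
Proof.
move=> basicB nonempty i; have [a Bi] := basicB i.
have := pclosure_subset B i; rewrite Bi subset1 (negbTE (nonempty i)) orbF.
exact/eqP.
Qed.

End ProjectionClosure.

Section Satisfiability.
Variables (M : multialgebra) (U : Type) (F : seqformalism M U).

Lemma satisfiable_nonempty R : satisfiable F R -> forall i, R i != set0.
Proof.
move=> [u [v /(phi_basic F) [B [basicB subBR _]]]] i.
have [a Bi] := basicB i; apply/set0Pn; exists a.
by apply: (subsetP (subBR i)); rewrite Bi set11.
Qed.

Lemma satisfiable_pclosure R : satisfiable F R -> satisfiable F (pclosure R).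
Proof. by move=> [u [v phiR]]; exists u, v; apply/(phi_closure F). Qed.

End Satisfiability.

Theorem proposition4p25 (M : multialgebra) (U : Type) (F : seqformalism M U)
    (R : mrel M) :
  ((exists i, pclosure R i = set0) -> ~ satisfiable F R) /\
  (satisfiable F R -> pconsistent (pclosure R)) /\
  (forall B : mrel M, basic B -> satisfiable F B -> pconsistent B).
Proof.
have consistent_closure (S : mrel M) : satisfiable F S -> pconsistent (pclosure S).
  move=> satS; split; first exact: proj_closed_pclosure.
  exact: satisfiable_nonempty (satisfiable_pclosure satS).
split; [|split; first exact: consistent_closure].
  by move=> [i empty_i] /consistent_closure [_ /(_ i)]; rewrite empty_i eqxx.
move=> B basicB /consistent_closure [closed nonempty].
have closureB := pclosure_basic basicB nonempty.
by split=> [i j neq_ij | i]; rewrite -!closureB //; apply: closed.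
Qed.
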